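(* In the BICM setting described in the context, with message $1$ transmitted and $\mathsf D$ the ORBGRAND metric, $\lim_{N\to\infty}\operatorname{var}\mathsf D(1)=0$.
   Context: Let $m\ge1$, let $\mathcal S$ be a constellation with $|\mathcal S|=2^m$, and let $\mu:\{+1,-1\}^m\to\mathcal S$ be a bijective labeling. For $s\in\mathcal S$, let $b_j(s)$ be the $j$-th coordinate of $\mu^{-1}(s)$. The channel is memoryless with output space $\mathbb R^d$ (norm $|\cdot|$) and transition densities $p(y\mid s)$. For $j=1,\dots,m$ define $$q_j^\pm(y)=2^{-(m-1)}\sum_{s:\,b_j(s)=\pm1}p(y\mid s).$$ For each $j$, let $\mathsf X_j$ be uniform on $\{\pm1\}$ and let $\mathsf Y$ have density $q_j^{\mathsf X_j}$ given $\mathsf X_j$. Let $\Psi_j$ be the CDF of $|\ln(q_j^+(\mathsf Y)/q_j^-(\mathsf Y))|$, and let $\bar\Psi=\frac1m\sum_j\Psi_j$. Assume that for each $j$: (A1) there exist $M_1>0$, $a>0$ and a polynomial $S_1$ with $q_j^\pm(y)<S_1(|y|)e^{-a|y|}$ for $|y|>M_1$; (A2) there exist $M_2>0$ and a polynomial $S_2$ with $|\ln(q_j^+(y)/q_j^-(y))|<S_2(|y|)$ for $|y|>M_2$; (A3) $\Psi_j$, $\Psi_j^{-1}$, $\bar\Psi$ and $\bar\Psi^{-1}$ are smooth with finite first, second and third derivatives. Random coding: the codebook has $\lceil e^{NR}\rceil$ codewords, each consisting of bits $\mathsf X_{i,j}(w)$, $i\le N$, $j\le m$, all i.i.d. uniform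 on $\{\pm1\}$. Message $1$ is transmitted. Symbol $i$ is $s_i(1)=\mu(\mathsf X_{i,1}(1),\dots,\mathsf X_{i,m}(1))$, and the outputs $\mathsf Y_i$ are conditionally independent with densities $p(\cdot\mid s_i(1))$. Let $\mathsf T_{i,j}=\ln(q_j^+(\mathsf Y_i)/q_j^-(\mathsf Y_i))$. Let $\mathsf R_{i,j}$ be the rank of $|\mathsf T_{i,j}|$ among all $mN$ values (rank $1$ is the smallest). Let $\mathrm{sgn}(t)=1$ if $t\ge0$ and $-1$ otherwise. The ORBGRAND metric is $$\mathsf D(w)=\frac1{mN}\sum_{i,j}\frac{\mathsf R_{i,j}}{mN}\mathbf 1\big(\mathrm{sgn}(\mathsf T_{i,j})\mathsf X_{i,j}(w)<0\big).$$ *)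

From HB Require Import structures.
From mathcomp Require Import all_boot all_order all_algebra.
From mathcomp Require Import all_classical all_reals all_analysis.
Set Implicit Arguments. Unset Strict Implicit. Unset Printing Implicit Defensive.
Import Order.TTheory GRing.Theory Num.Theory.
Import numFieldNormedType.Exports.
Local Open Scope classical_set_scope.
Local Open Scope ring_scope.

(* Iterated one-dimensional Lebesgue integrals; by Tonelli, for nonnegative
   measurable f this is the integral of f w.r.t. d-dimensional Lebesgue measure. *)
Fixpoint lebint {R : realType} (d : nat) : (d.-tuple R -> \bar R) -> \bar R :=
  match d return (d.-tuple R -> \bar R) -> \bar R with
  | 0 => fun f => f [tuple]
  | d'.+1 => fun f =>
      (\int[@lebesgue_measure R]_(x in [set: R])
          lebint (fun t : d'.-tuple R => f [tuple of x :: t]))%E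
  end.

Definition eucl {R : realType} (d : nat) (y : d.-tuple R) : R :=
  Num.sqrt (\sum_(k < d) (tnth y k) ^+ 2).

Definition pm {R : realType} (b : bool) : R := if b then 1 else -1.

Definition sgnR {R : realType} (t : R) : R := if 0 <= t then 1 else -1.

(* q_j^b(y) = 2^{-(m-1)} sum_{s : b_j(s) = b} p(y|s); the sum over constellation
   points s with b_j(s) = b is written as the sum over labels x with x_j = b,
   s = mu x  (mu is a bijection). *)
Definition qbit {R : realType} (m d : nat) (S : finType)
  (mu : {ffun 'I_m -> bool} -> S) (p : S -> d.-tuple R -> R)
  (j : 'I_m) (b : bool) (y : d.-tuple R) : R :=
  ((2 ^ (m - 1))%:R)^-1 * \sum_(x : {ffun 'I_m -> bool} | x j == b) p (mu x) y.

Definition LLR {R : realType} (m d : nat) (S : finType)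
  (mu : {ffun 'I_m -> bool} -> S) (p : S -> d.-tuple R -> R)
  (j : 'I_m) (y : d.-tuple R) : R :=
  ln (qbit mu p j true y / qbit mu p j false y).

(* Psi_j(t) = P(|ln(q_j^+(Y)/q_j^-(Y))| <= t) where X_j uniform on {+-1} and Y
   has density q_j^{X_j} given X_j *)
Definition Psi {R : realType} (m d : nat) (S : finType)
  (mu : {ffun 'I_m -> bool} -> S) (p : S -> d.-tuple R -> R)
  (j : 'I_m) (t : R) : R :=
  2^-1 * fine (lebint (fun y => (((`|LLR mu p j y| <= t)%R)%:R * qbit mu p j true y)%:E))
  + 2^-1 * fine (lebint (fun y => (((`|LLR mu p j y| <= t)%R)%:R * qbit mu p j false y)%:E)).

Definition Psibar {R : realType} (m d : nat) (S : finType)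
  (mu : {ffun 'I_m -> bool} -> S) (p : S -> d.-tuple R -> R) (t : R) : R :=
  (m%:R)^-1 * \sum_(j < m) Psi mu p j t.

Definition cdf_inv {R : realType} (F : R -> R) (u : R) : R :=
  inf [set t | u <= F t].

Definition smooth_on {R : realType} (D : set R) (f : R -> R) : Prop :=
  forall n t, D t -> derivable (derive1n n f) t 1.

(* position (i,j) |-> i*m + j, used only to break ties in the ranking *)
Definition enc (N m : nat) (k : 'I_N * 'I_m) : nat := (k.1 * m + k.2)%N.

(* rank of |T k| among all mN values (rank 1 = smallest); ties (a null event
   under the assumptions) are broken by the index order enc. *)
Definition rankT {R : realType} (N m : nat) (T : 'I_N * 'I_m -> R)
  (k : 'I_N * 'I_m) : nat :=
  #|[set k' : 'I_N * 'I_m | (`|T k'| < `|T k|)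
        || ((`|T k'| == `|T k|) && (enc k' <= enc k)%N)]|.

Definition orbgrand_D {R : realType} (N m : nat) (T : 'I_N * 'I_m -> R)
  (x : 'I_N -> {ffun 'I_m -> bool}) : R :=
  ((m * N)%:R)^-1 * \sum_(k : 'I_N * 'I_m)
      ((rankT T k)%:R / (m * N)%:R) * ((sgnR (T k) * pm (x k.1 k.2) < 0)%R)%:R.

Definition varP {R : realType} (d0 : measure_display) (Omega : measurableType d0)
  (P : probability Omega R) (f : Omega -> R) : R :=
  let mean := fine (\int[P]_w (f w)%:E)%E in
  fine (\int[P]_w ((f w - mean) ^+ 2)%:E)%E.

From HB Require Import structures.
From mathcomp Require Import all_boot all_order all_algebra.
From mathcomp Require Import all_classical all_reals all_analysis.
From mathcomp Require Import ring lra measurable_realfun.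
Import Order.TTheory GRing.Theory Num.Theory.
Import numFieldNormedType.Exports.
Local Open Scope classical_set_scope.
Local Open Scope ring_scope.
Set Implicit Arguments. Unset Strict Implicit. Unset Printing Implicit Defensive.

(* Up to the factor (mN)^-2, D(1) counts the pairs (k, k') of bit positions
   such that k' is ranked below k and bit k is received in error.  The event
   of a pair only involves the (at most two) channel uses carrying k and k';
   distinct channel uses are independent, so the events of two pairs with
   disjoint channel uses are independent (pi-lambda theorem over the rectangles
   whose probabilities the joint law prescribes).  A pair shares a channel use
   with at most 4m * mN pairs, hence
     var D(1) <= (mN)^-4 * (mN)^2 * 4m * mN = 4 / N. *)

Lemma sum_pair_fst (R : nmodType) (I : finType) (F : I -> R) :
  \sum_(b : I * I) F b.1 = (\sum_i F i) *+ #|I|.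
Proof.
rewrite -(pair_bigA _ (fun i _ => F i)) -sumrMnl /=.
by apply: eq_bigr => i _; rewrite sumr_const.
Qed.

Lemma sum_pair_snd (R : nmodType) (I : finType) (F : I -> R) :
  \sum_(b : I * I) F b.2 = (\sum_i F i) *+ #|I|.
Proof.
rewrite -(pair_bigA _ (fun _ j => F j)) /= exchange_big -sumrMnl /=.
by apply: eq_bigr => i _; rewrite sumr_const.
Qed.

Lemma mem_set_predE (T : Type) (b : pred T) x : (x \in [set y | b y]) = b x.
Proof. by apply/idP/idP => [/set_mem|/mem_set]. Qed.

Lemma card_set_predE (T : finType) (b : pred T) : #|[set x | b x]| = (\sum_x b x)%N.
Proof.
rewrite -sum1_card big_mkcond /=; apply: eq_bigr => x _.
by rewrite mem_set_predE; case: (b x).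
Qed.

Section event_probabilities.
Context d (Omega : measurableType d) (R : realType) (P : probability Omega R).

Definition prob (A : set Omega) : R := fine (P A).

Lemma probE (A : set Omega) : measurable A -> P A = (prob A)%:E.
Proof. by move=> mA; rewrite /prob fineK // fin_num_measure. Qed.

Lemma prob_itv01 (A : set Omega) : measurable A -> 0 <= prob A <= 1.
Proof.
move=> mA; have le1 := probability_le1 P mA; have ge0 : (0 <= P A)%E := measure_ge0 P A.
by rewrite probE // !lee_fin in le1 ge0; rewrite ge0 le1.
Qed.

Definition prob_cov (A B : set Omega) : R := prob (A `&` B) - prob A * prob B.

Lemma prob_cov_indep (A B : set Omega) : measurable A -> measurable B ->
  P (A `&` B) = (P A * P B)%E -> prob_cov A B = 0.
Proof.
by move=> mA mB PAB; rewrite /prob_cov /prob PAB fineM ?fin_num_measure ?subrr.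
Qed.

Lemma norm_prob_cov_le1 (A B : set Omega) : measurable A -> measurable B ->
  `|prob_cov A B| <= 1.
Proof.
move=> mA mB; have /andP[AB0 AB1] := prob_itv01 (measurableI _ _ mA mB).
have /andP[A0 A1] := prob_itv01 mA; have /andP[B0 B1] := prob_itv01 mB.
have AxB0 : 0 <= prob A * prob B by rewrite mulr_ge0.
have AxB1 : prob A * prob B <= 1 by rewrite mulr_ile1.
by rewrite /prob_cov ler_norml; apply/andP; split; lra.
Qed.

Lemma varPE (f : Omega -> R) : varP P f = fine (covariance P f f).
Proof. by rewrite /varP covariance.unlock expectation.unlock. Qed.

Lemma expectation_sum_indic (I : finType) (E : I -> set Omega) :
  (forall i, measurable (E i)) ->
  \sum_i \1_(E i) \in Lfun P 1 /\
  ('E_P[\sum_i \1_(E i)] = (\sum_i prob (E i))%:E)%E.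
Proof.
move=> mE; have L1 i : \1_(E i) \in Lfun P 1.
  by apply/Lfun1_integrable; exact: integrable_indic.
split; first exact: rpred_sum.
rewrite -(big_map (fun i => \1_(E i)) xpredT idfun) expectation_sum; last first.
  by move=> _ /mapP[i _ ->].
rewrite big_map -sumEFin; apply: eq_bigr => i _.
by rewrite expectation_indic // probE.
Qed.

Lemma varP_scale_sum_indic (I : finType) (E : I -> set Omega) (c : R) :
  (forall i, measurable (E i)) ->
  varP P (fun w => c * \sum_i \1_(E i) w) =
  c ^+ 2 * \sum_i \sum_j prob_cov (E i) (E j).
Proof.
move=> mE; pose S : Omega -> R := \sum_i \1_(E i).
have mEE (ij : I * I) : measurable (E ij.1 `&` E ij.2) by exact: measurableI.
have [LS ES] := expectation_sum_indic mE.
have [LSS ESS] := expectation_sum_indic mEE.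
have SS : S * S = \sum_(ij : I * I) \1_(E ij.1 `&` E ij.2).
  rewrite /S !fct_sumE mulrfctE; apply/funext => w /=.
  rewrite mulr_suml -(pair_bigA _ (fun i j => \1_(E i `&` E j) w : R)).
  apply: eq_bigr => i _.
  by rewrite mulr_sumr; apply: eq_bigr => j _; rewrite indicI.
have -> : (fun w => c * \sum_i \1_(E i) w) = c \o* S.
  by apply/funext => w; rewrite /S fct_sumE mulrC.
have sqcS : (c \o* S) * (c \o* S) = c ^+ 2 \o* (S * S).
  by rewrite !mulrfctE; apply/funext => w /=; rewrite mulrACA -expr2 mulrC.
have LcS : c \o* S \in Lfun P 1 by exact: Lfun_scale.
have LcSS : (c \o* S) * (c \o* S) \in Lfun P 1 by rewrite sqcS SS Lfun_scale.
rewrite varPE covarianceE // sqcS !expectationZl // ?SS // ES ESS /=.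
rewrite -(pair_bigA _ (fun i j => prob (E i `&` E j))) mulrACA -expr2 -mulrBr.
congr (_ * _); rewrite mulr_suml -sumrB; apply: eq_bigr => i _.
by rewrite mulr_sumr -sumrB.
Qed.
End event_probabilities.

Section pi_lambda_independence.
Context d (Omega : measurableType d) (R : realType) (P : probability Omega R).

Let indep_with (B : set Omega) :=
  [set A | measurable A /\ P (A `&` B) = (P A * P B)%E].

Lemma probability_setD (A C : set Omega) : measurable A -> measurable C ->
  C `<=` A -> P (A `\` C) = (P A - P C)%E.
Proof.
move=> mA mC CA; rewrite -[in RHS](setIidr CA).
exact: measureD mA mC (le_lt_trans (probability_le1 P mA) (ltry 1)).
Qed.

Lemma lambda_system_indep_with (B : set Omega) :
  measurable B -> lambda_system setT (indep_with B).
Proof.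
move=> mB; split => //.
- by split => //; rewrite setTI probability_setT mul1e.
- move=> A C CA [mA PA] [mC PC]; split; first exact: measurableD.
  have mAB := measurableI _ _ mA mB; have mCB := measurableI _ _ mC mB.
  have CBA : C `&` B `<=` A `&` B by move=> w [Cw Bw]; split => //; exact: CA.
  have -> : (A `\` C) `&` B = (A `&` B) `\` (C `&` B).
    apply/seteqP; split => w /=; first by move=> [[Aw nCw] Bw]; split => // -[].
    by move=> [[Aw Bw] nCBw]; split => //; split => // Cw; exact: nCBw.
  rewrite !probability_setD // PA PC !probE //.
  by rewrite -!EFinM -!EFinB mulrBl.
- move=> F ndF HF; have mF i : measurable (F i) by have [] := HF i.
  split; first exact: bigcup_measurable.
  have ndFB : nondecreasing_seq (fun i => F i `&` B).
    by move=> i j ij; apply/subsetPset; apply: setSI; apply/subsetPset/ndF.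
  have mFB i : measurable (F i `&` B) by exact: measurableI.
  have cFB := nondecreasing_cvg_mu (mu := P) mFB
    (bigcup_measurable (fun k _ => mFB k)) ndFB.
  have cF := nondecreasing_cvg_mu (mu := P) mF
    (bigcup_measurable (fun k _ => mF k)) ndF.
  have cFxB := cvgeZr (fin_num_measure P _ mB) cF.
  have cFBx : (P \o (fun i => F i `&` B)) @ \oo --> (P (\bigcup_n F n) * P B)%E.
    by apply: cvg_trans cFxB; apply: near_eq_cvg; near=> n => /=; have [_ ->] := HF n.
  by rewrite setI_bigcupl; exact: cvg_unique cFB cFBx.
Unshelve. all: by end_near.
Qed.

Lemma indep_sigma_generated (G1 G2 : set (set Omega)) :
  setI_closed G1 -> setI_closed G2 ->
  G1 `<=` measurable -> G2 `<=` measurable ->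
  (forall A B, G1 A -> G2 B -> P (A `&` B) = (P A * P B)%E) ->
  forall A B, <<s G1 >> A -> <<s G2 >> B -> P (A `&` B) = (P A * P B)%E.
Proof.
move=> IG1 IG2 mG1 mG2 indepG A B sA sB.
have smG1 : <<s G1 >> `<=` measurable.
  exact: smallest_sub (@sigma_algebra_measurable _ _) mG1.
have sG1_G2 B' : G2 B' -> <<s G1 >> `<=` indep_with B'.
  move=> GB'; apply: lambda_system_subset => //.
    exact: lambda_system_indep_with (mG2 _ GB').
  by move=> A' GA'; split; [exact: mG1|exact: indepG].
suff : <<s G2 >> `<=` indep_with A by move=> /(_ _ sB) [_]; rewrite setIC muleC.
apply: lambda_system_subset => //; first exact: lambda_system_indep_with (smG1 _ sA).
move=> B' GB'; split; first exact: mG2.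
by rewrite setIC muleC; have [_ ->] := sG1_G2 _ GB' _ sA.
Qed.

End pi_lambda_independence.

Lemma measurable_invr (R : realType) : measurable_fun [set: R] (@GRing.inv R).
Proof.
have -> : [set: R] = [set 0] `|` [set x | x != 0].
  by apply/seteqP; split => x // _; case: (eqVneq x 0) => [->|]; [left|right].
apply/measurable_funU => //; first by apply: open_measurable; exact: open_neq.
split; first exact: measurable_fun_set1.
apply: open_continuous_measurable_fun; first exact: open_neq.
by move=> x; rewrite inE => x0; exact: inv_continuous.
Qed.

Section llr_measurability.
Context (R : realType) (m d : nat) (S : finType)
  (mu : {ffun 'I_m -> bool} -> S) (p : S -> d.-tuple R -> R).
Hypothesis mp : forall s, measurable_fun [set: d.-tuple R] (p s).

Lemma measurable_qbit j b : measurable_fun [set: d.-tuple R] (qbit mu p j b).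
Proof.
apply: measurable_funM; first exact: measurable_cst.
rewrite (_ : (fun y => _) =
    fun y => \sum_(x : {ffun 'I_m -> bool}) (if x j == b then p (mu x) y else 0)).
  by apply: measurable_sum => x; case: (x j == b).
by apply/funext => y; rewrite big_mkcond.
Qed.

Lemma measurable_LLR j : measurable_fun [set: d.-tuple R] (LLR mu p j).
Proof.
apply: measurableT_comp; first exact: measurable_ln.
apply: measurable_funM; first exact: measurable_qbit.
by apply: measurableT_comp; [exact: measurable_invr|exact: measurable_qbit].
Qed.

End llr_measurability.

Lemma measure_fin_bigcupT d (T : measurableType d) (R : realType)
    (mu : {measure set T -> \bar R}) (I : finType) (F : I -> set T) :
  (forall i, measurable (F i)) -> trivIset setT F ->
  mu (\bigcup_i F i) = (\sum_i mu (F i))%E.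
Proof.
move=> mF tF; rewrite measure_fin_bigcup //; last exact: finite_finset.
rewrite (fsbig_seq _ _ (index_enum_uniq I)); apply: eq_fsbigl.
by apply/seteqP; split => i //= _; rewrite mem_index_enum.
Qed.

Section random_coding.
Context (R : realType) (m d : nat) (S : finType)
  (mu : {ffun 'I_m -> bool} -> S) (p : S -> d.-tuple R -> R)
  (d0 : measure_display) (Omega : measurableType d0) (P : probability Omega R)
  (X : nat -> Omega -> {ffun 'I_m -> bool}) (Y : nat -> Omega -> d.-tuple R).
Hypotheses (mX : forall i x, measurable [set w | X i w = x])
  (mY : forall i, measurable_fun [set: Omega] (Y i)).
Hypothesis law : forall (N : nat) (x : nat -> {ffun 'I_m -> bool})
    (A : nat -> set (d.-tuple R)),
  (forall i, measurable (A i)) ->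
  P [set w | forall i, (i < N)%N -> X i w = x i /\ A i (Y i w)] =
  (\prod_(i < N) (((2 ^ m)%:R)^-1 *
     fine (lebint (fun y => ((\1_(A i) y : R) * p (mu (x i)) y)%:E))))%:E.

Local Notation label := {ffun 'I_m -> bool}.

Definition rectangle N (C : nat -> pred label) (A : nat -> set (d.-tuple R)) :=
  [set w : Omega | forall i, (i < N)%N -> C i (X i w) /\ A i (Y i w)].

Definition channel_mass (A : set (d.-tuple R)) (x : label) : R :=
  fine (lebint (fun y => ((\1_A y : R) * p (mu x) y)%:E)).

Definition symbol_law (C : pred label) (A : set (d.-tuple R)) : R :=
  ((2 ^ m)%:R)^-1 * \sum_(x | C x) channel_mass A x.

(* [law] is stated for nat-indexed words; labels past N are never inspected. *)
Definition extend_word N (xs : {ffun 'I_N -> label}) (i : nat) : label :=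
  if insub i is Some j then xs j else [ffun=> true].

Lemma extend_wordE N xs (i : 'I_N) : extend_word xs i = xs i.
Proof. by rewrite /extend_word valK. Qed.

Lemma measurable_forall_lt (G : nat -> set Omega) N :
  (forall i, measurable (G i)) -> measurable [set w | forall i, (i < N)%N -> G i w].
Proof.
move=> mG; rewrite (_ : [set w | _] = \bigcap_i (if (i < N)%N then G i else setT)).
  by apply: bigcapT_measurable => i; case: ifP.
apply/seteqP; split => w /= H i; first by case: ifPn => // /H.
by move=> iN; have := H i I; rewrite iN.
Qed.

Lemma rectangle_law N C A : (forall i, measurable (A i)) ->
  measurable (rectangle N C A) /\
  P (rectangle N C A) = (\prod_(i < N) symbol_law (C i) (A i))%:E.
Proof.
move=> mA.
pose cell (xs : {ffun 'I_N -> label}) :=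
  [set w | forall i, (i < N)%N -> X i w = extend_word xs i /\ A i (Y i w)].
pose piece (xs : {ffun 'I_N -> label}) :=
  if [forall i : 'I_N, C i (xs i)] then cell xs else set0.
have mcell xs : measurable (cell xs).
  apply: measurable_forall_lt => i; apply: measurableI; first exact: mX.
  by rewrite -[X in measurable X]setTI; exact: mY.
have mpiece xs : measurable (piece xs) by rewrite /piece; case: ifP.
have cell_inj xs xs' w : cell xs w -> cell xs' w -> xs = xs'.
  move=> c c'; apply/ffunP => i.
  rewrite -!extend_wordE.
  by have [<- _] := c i (ltn_ord i); have [<- _] := c' i (ltn_ord i).
have tpiece : trivIset setT piece.
  move=> xs xs' _ _ [w []]; rewrite /piece.
  by case: ifP => // _; case: ifP => // _; exact: cell_inj.
have rectE : rectangle N C A = \bigcup_xs piece xs.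
  apply/seteqP; split => w.
    move=> H; exists [ffun i : 'I_N => X i w] => //; rewrite /piece.
    case: forallP => [_ i iN|[i]]; last by rewrite ffunE; have [] := H i (ltn_ord i).
    by have [_ Ai] := H i iN; rewrite /extend_word insubT ffunE.
  move=> [xs _]; rewrite /piece; case: forallP => // Cxs cw i iN.
  have [-> Ai] := cw i iN; rewrite /extend_word insubT.
  by split => //; exact: (Cxs (Sub i iN)).
rewrite rectE; split; first exact: fin_bigcup_measurable.
pose weight i (x : label) := (C i x)%:R * (((2 ^ m)%:R)^-1 * channel_mass (A i) x).
have Ppiece xs : P (piece xs) = (\prod_(i < N) weight i (xs i))%:E.
  rewrite /piece; case: forallP => [Cxs|/existsNP[i /negP/negbTE Ci]].
    rewrite law //; congr EFin; apply: eq_bigr => i _.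
    by rewrite /weight Cxs mul1r extend_wordE.
  by rewrite measure0 (bigD1 i) //= /weight Ci !mul0r.
rewrite measure_fin_bigcupT // (eq_bigr _ (fun xs _ => Ppiece xs)) sumEFin.
congr EFin.
rewrite (eq_bigr (fun i : 'I_N => \sum_x weight i x)) ?bigA_distr_bigA // => i _.
rewrite /symbol_law big_mkcond mulr_sumr; apply: eq_bigr => x _.
by rewrite /weight; case: (C i x); rewrite ?mul1r ?mul0r ?mulr0.
Qed.

Hypothesis p1 : forall s, lebint (fun y => (p s y)%:E) = 1%E.

Lemma symbol_lawT (C : pred label) : (forall x, C x) -> symbol_law C setT = 1.
Proof.
move=> CT; rewrite /symbol_law (eq_bigl predT) //.
rewrite (eq_bigr (fun _ => 1)) => [|x _]; last first.
  rewrite /channel_mass (_ : (fun y => _) = fun y => (p (mu x) y)%:E) ?p1 //.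
  by apply/funext => y; rewrite indicT mul1r.
by rewrite sumr_const card_ffun card_bool card_ord mulVf // pnatr_eq0 expn_eq0.
Qed.

Lemma eq_symbol_law (C C' : pred label) A :
  C =1 C' -> symbol_law C A = symbol_law C' A.
Proof. by move=> CC'; rewrite /symbol_law (eq_bigl _ _ CC'). Qed.

Lemma setI_rectangle N C1 A1 C2 A2 : rectangle N C1 A1 `&` rectangle N C2 A2 =
  rectangle N (fun i x => C1 i x && C2 i x) (fun i => A1 i `&` A2 i).
Proof.
apply/seteqP; split => w /=.
  move=> [R1 R2] i iN; have [? ?] := R1 i iN; have [? ?] := R2 i iN.
  by split; [apply/andP|].
by move=> R12; split => i iN; have [/andP[? ?] [? ?]] := R12 i iN.
Qed.

Definition rectangles_on N (J : pred nat) : set (set Omega) :=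
  [set E | exists (C : nat -> pred label) (A : nat -> set (d.-tuple R)),
     [/\ forall i, measurable (A i),
         forall i, ~~ J i -> (forall x, C i x) /\ A i = setT &
         E = rectangle N C A]].

Lemma setI_closed_rectangles_on N J : setI_closed (rectangles_on N J).
Proof.
move=> _ _ [C1 [A1 [mA1 J1 ->]]] [C2 [A2 [mA2 J2 ->]]]; rewrite setI_rectangle.
exists (fun i x => C1 i x && C2 i x), (fun i => A1 i `&` A2 i); split => //.
- by move=> i; exact: measurableI.
- move=> i Ji; have [C1T ->] := J1 i Ji; have [C2T ->] := J2 i Ji.
  by split; [move=> x; rewrite C1T C2T|exact: setIT].
Qed.

Lemma rectangles_on_measurable N J : rectangles_on N J `<=` measurable.
Proof. by move=> _ [C [A [mA _ ->]]]; have [] := rectangle_law N C mA. Qed.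

Lemma sigma_rectangles_on_measurable N J : <<s rectangles_on N J >> `<=` measurable.
Proof.
exact: smallest_sub (@sigma_algebra_measurable _ _) (@rectangles_on_measurable N J).
Qed.

(* Coordinates outside J contribute a factor 1 to the product formula. *)
Lemma indep_rectangles_on N J1 J2 : (forall i, ~~ (J1 i && J2 i)) ->
  forall A B, rectangles_on N J1 A -> rectangles_on N J2 B ->
  P (A `&` B) = (P A * P B)%E.
Proof.
move=> J12 _ _ [C1 [A1 [mA1 J1T ->]]] [C2 [A2 [mA2 J2T ->]]].
rewrite setI_rectangle.
have mA12 i : measurable (A1 i `&` A2 i) by exact: measurableI.
have [_ ->] := rectangle_law N (fun i x => C1 i x && C2 i x) mA12.
have [_ ->] := rectangle_law N C1 mA1; have [_ ->] := rectangle_law N C2 mA2.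
rewrite -EFinM -big_split /=; congr EFin; apply: eq_bigr => i _.
case J1i : (J1 i).
- have [C2T ->] : (forall x, C2 i x) /\ A2 i = setT.
    by apply: J2T; move: (J12 i); rewrite J1i.
  by rewrite setIT (symbol_lawT C2T) mulr1; apply: eq_symbol_law => x; rewrite C2T andbT.
- have [C1T ->] := J1T i (negbT J1i).
  by rewrite setTI (symbol_lawT C1T) mul1r; apply: eq_symbol_law => x; rewrite C1T.
Qed.

Lemma indep_sigma_rectangles_on N J1 J2 : (forall i, ~~ (J1 i && J2 i)) ->
  forall A B, <<s rectangles_on N J1 >> A -> <<s rectangles_on N J2 >> B ->
  P (A `&` B) = (P A * P B)%E.
Proof.
move=> J12; apply: indep_sigma_generated; do ?exact: setI_closed_rectangles_on.
- exact: rectangles_on_measurable.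
- exact: rectangles_on_measurable.
- exact: indep_rectangles_on.
Qed.

(* Measurability for the sigma-algebra generated by [rectangles_on N J]
   expresses that an event only depends on the channel uses in J. *)
Lemma measurable_Y_rectangles_on N (J : pred nat) i : J i -> (i < N)%N ->
  measurable_fun [set: g_sigma_algebraType (rectangles_on N J)]
    (Y i : g_sigma_algebraType (rectangles_on N J) -> d.-tuple R).
Proof.
move=> Ji iN _ B mB; rewrite setTI; apply: sub_sigma_algebra.
exists (fun _ _ => true), (fun k => if k == i then B else setT); split.
- by move=> k; case: ifP.
- by move=> k Jk; split => //; case: eqP => // ki; rewrite ki Ji in Jk.
- apply/seteqP; split => w /=; first by move=> Bw k kN; split => //; case: eqP => // ->.
  by move=> H; have [_] := H i iN; rewrite eqxx.
Qed.

Lemma measurable_X_rectangles_on N (J : pred nat) i (Q : pred label) :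
  J i -> (i < N)%N -> (rectangles_on N J).-sigma.-measurable [set w | Q (X i w)].
Proof.
move=> Ji iN; apply: sub_sigma_algebra.
exists (fun k => if k == i then Q else predT), (fun k => setT); split => //.
- by move=> k Jk; split => //; case: eqP => // ki; rewrite ki Ji in Jk.
- apply/seteqP; split => w /=; first by move=> Qw k kN; split => //; case: eqP => // ->.
  by move=> H; have [] := H i iN; rewrite eqxx.
Qed.

Hypothesis mp : forall s, measurable_fun [set: d.-tuple R] (p s).

Local Notation pos N := ('I_N * 'I_m)%type.

Definition llrs N (w : Omega) (k : pos N) : R := LLR mu p k.2 (Y k.1 w).

Definition ranked_below N (T : pos N -> R) (k k' : pos N) : bool :=
  (`|T k'| < `|T k|) || ((`|T k'| == `|T k|) && (enc k' <= enc k)%N).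

Definition bit_error N (T : pos N -> R) (x : 'I_N -> label) (k : pos N) : bool :=
  sgnR (T k) * pm (x k.1 k.2) < 0.

Definition pair_event N (a : pos N * pos N) : set Omega :=
  [set w | ranked_below (@llrs N w) a.1 a.2 &&
           bit_error (@llrs N w) (fun i : 'I_N => X i w) a.1].

Definition uses_of N (a : pos N * pos N) : pred nat :=
  fun i => (i == a.1.1) || (i == a.2.1).

Definition share_use N (a b : pos N * pos N) : bool :=
  [|| a.1.1 == b.1.1, a.1.1 == b.2.1, a.2.1 == b.1.1 | a.2.1 == b.2.1].

Lemma orbgrand_D_pair_events N w :
  orbgrand_D (@llrs N w) (fun i : 'I_N => X i w) =
  ((m * N)%:R^-1) ^+ 2 * \sum_(a : pos N * pos N) \1_(pair_event a) w.
Proof.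
rewrite /orbgrand_D expr2 -mulrA; congr (_ * _).
rewrite -(pair_bigA _ (fun k k' => \1_(pair_event (k, k')) w)) mulr_sumr.
apply: eq_bigr => k _; rewrite /rankT card_set_predE natr_sum mulrAC mulrC.
congr (_ * _); rewrite mulr_suml; apply: eq_bigr => k' _.
by rewrite indicE mem_set_predE -natrM mulnb.
Qed.

Lemma sgnR_pm_lt0 (t : R) b :
  (sgnR t * pm b < 0) = ((0 <= t) && ~~ b) || (~~ (0 <= t) && b).
Proof.
rewrite /sgnR /pm; case: (0 <= t); case: b;
  by rewrite /= ?mulr1 ?mul1r ?mulrN1 ?opprK ?ltr10 ?ltrN10.
Qed.

Lemma pair_event_sigma N (a : pos N * pos N) :
  <<s rectangles_on N (uses_of a) >> (pair_event a).
Proof.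
pose T := g_sigma_algebraType (rectangles_on N (uses_of a)).
have uses1 : uses_of a a.1.1 by rewrite /uses_of eqxx.
have uses2 : uses_of a a.2.1 by rewrite /uses_of eqxx orbT.
have mT (k : pos N) : uses_of a k.1 ->
    measurable_fun [set: T] (fun w : T => LLR mu p k.2 (Y k.1 w)).
  move=> uk; apply: measurableT_comp; first exact: measurable_LLR.
  exact: measurable_Y_rectangles_on.
have mabsT (k : pos N) : uses_of a k.1 ->
    measurable_fun [set: T] (fun w : T => `|LLR mu p k.2 (Y k.1 w)|).
  by move=> uk; apply: measurableT_comp (mT k uk); exact: normr_measurable.
have mbit (k : pos N) : uses_of a k.1 ->
    measurable_fun [set: T] (fun w : T => X k.1 w k.2).
  move=> uk; apply: (measurable_fun_bool true); rewrite setTI.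
  exact: (measurable_X_rectangles_on (fun x : label => x k.2) uk (ltn_ord _)).
have meas_event : measurable_fun [set: T] (fun w : T =>
    ranked_below (@llrs N w) a.1 a.2 &&
    bit_error (@llrs N w) (fun i : 'I_N => X i w) a.1).
  rewrite /ranked_below /bit_error /llrs; under eq_fun do rewrite sgnR_pm_lt0.
  apply: measurable_and.
    apply: measurable_or; first exact: measurable_fun_ltr (mabsT _ uses2) (mabsT _ uses1).
    apply: measurable_and; last exact: measurable_cst.
    exact: measurable_fun_eqr (mabsT _ uses2) (mabsT _ uses1).
  apply: measurable_or; apply: measurable_and.
  - exact: measurable_fun_ler (measurable_cst _) (mT _ uses1).
  - exact: measurable_neg (mbit _ uses1).
  - exact: measurable_neg (measurable_fun_ler (measurable_cst _) (mT _ uses1)).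
  - exact: mbit.
by have := meas_event measurableT [set true] I; rewrite setTI.
Qed.

Lemma measurable_pair_event N (a : pos N * pos N) : measurable (pair_event a).
Proof. by apply: sigma_rectangles_on_measurable; exact: pair_event_sigma. Qed.

Lemma indep_pair_events N (a b : pos N * pos N) : ~~ share_use a b ->
  P (pair_event a `&` pair_event b) = (P (pair_event a) * P (pair_event b))%E.
Proof.
move=> ab; apply: (@indep_sigma_rectangles_on N (uses_of a) (uses_of b)).
- move=> i; apply/negP => /andP[/orP[]/eqP-> /orP[]/eqP/val_inj eq_ab]; move: ab;
    by rewrite /share_use eq_ab eqxx ?orbT.
- exact: pair_event_sigma.
- exact: pair_event_sigma.
Qed.

Lemma norm_cov_pair_events_le N (a b : pos N * pos N) :
  `|prob_cov P (pair_event a) (pair_event b)| <= (share_use a b)%:R.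
Proof.
have ma := measurable_pair_event a; have mb := measurable_pair_event b.
case: (boolP (share_use a b)) => ab; first exact: norm_prob_cov_le1.
by rewrite prob_cov_indep ?indep_pair_events ?normr0.
Qed.

Lemma sum_share_use_le N (a : pos N * pos N) :
  \sum_b ((share_use a b)%:R : R) <= 4 * m%:R * (N * m)%:R.
Proof.
have useE (t : 'I_N) : \sum_(k : pos N) ((t == k.1)%:R : R) = m%:R.
  rewrite -(pair_bigA _ (fun i _ => ((t == i)%:R : R))) /= (bigD1 t) //= eqxx.
  rewrite sumr_const card_ord big1 ?addr0 // => i; rewrite eq_sym => /negbTE ->.
  by rewrite big1.
have share_le b : ((share_use a b)%:R : R) <=
    (a.1.1 == b.1.1)%:R + (a.1.1 == b.2.1)%:R +
    (a.2.1 == b.1.1)%:R + (a.2.1 == b.2.1)%:R.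
  by rewrite /share_use; do 4!case: (_ == _); rewrite /=; lra.
apply: le_trans (ler_sum _ (fun b _ => share_le b)) _.
rewrite !big_split /= !(sum_pair_fst (fun k : pos N => ((_ == k.1)%:R : R))).
rewrite !(sum_pair_snd (fun k : pos N => ((_ == k.1)%:R : R))) !useE card_prod !card_ord.
by rewrite -[m%:R *+ _]mulr_natr -mulrA; set x := m%:R * _; lra.
Qed.

Lemma norm_varP_orbgrand_D_le N : (0 < m)%N -> (0 < N)%N ->
  `|varP P (fun w => orbgrand_D (@llrs N w) (fun i : 'I_N => X i w))| <= 4 / N%:R.
Proof.
move=> m_gt0 N_gt0.
under eq_fun do rewrite orbgrand_D_pair_events.
rewrite varP_scale_sum_indic; last exact: measurable_pair_event.
have cov_le : `|\sum_(a : pos N * pos N) \sum_(b : pos N * pos N)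
      prob_cov P (pair_event a) (pair_event b)| <=
    \sum_(a : pos N * pos N) (4 * m%:R * (N * m)%:R).
  apply: le_trans (ler_norm_sum _ _ _) _; apply: ler_sum => a _.
  apply: le_trans (ler_norm_sum _ _ _) (le_trans _ (sum_share_use_le a)).
  by apply: ler_sum => b _; exact: norm_cov_pair_events_le.
rewrite normrM normrX ger0_norm ?invr_ge0 ?ler0n //.
apply: le_trans (ler_wpM2l _ cov_le) _; first by rewrite exprn_ge0 ?invr_ge0 ?ler0n.
rewrite sumr_const !card_prod !card_ord -mulr_natl le_eqVlt; apply/orP; left; apply/eqP.
by rewrite !natrM; field; rewrite !pnatr_eq0 -!lt0n m_gt0 N_gt0.
Qed.

Lemma varP_orbgrand_D_cvg0 : (0 < m)%N ->
  (fun N : nat => varP P (fun w =>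
     orbgrand_D (fun k : 'I_N * 'I_m => LLR mu p k.2 (Y k.1 w))
                (fun i : 'I_N => X i w)))
  @ \oo --> 0.
Proof.
move=> m_gt0; apply/cvgr0Pnorm_le => e e_gt0; near=> N.
have N_gt0 : (0 < N)%N by near: N; exact: nbhs_infty_gt.
apply: le_trans (norm_varP_orbgrand_D_le m_gt0 N_gt0) _.
rewrite ler_pdivrMr ?ltr0n // mulrC -ler_pdivrMr //; apply: ltW.
by near: N; exact: nbhs_infty_gtr.
Unshelve. all: by end_near.
Qed.

End random_coding.

Theorem lemma8
  (R : realType) (m d : nat) (S : finType)
  (mu : {ffun 'I_m -> bool} -> S) (p : S -> d.-tuple R -> R)
  (d0 : measure_display) (Omega : measurableType d0) (P : probability Omega R)
  (X : nat -> Omega -> {ffun 'I_m -> bool}) (Y : nat -> Omega -> d.-tuple R) :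
  (1 <= m)%N ->
  #|S| = (2 ^ m)%N ->
  bijective mu ->
  (* p(.|s) are transition densities on R^d *)
  (forall s, measurable_fun [set: d.-tuple R] (p s)) ->
  (forall s y, 0 <= p s y) ->
  (forall s, lebint (fun y => (p s y)%:E) = 1%E) ->
  (* (A1) *)
  (forall j : 'I_m, exists (M1 a : R) (S1 : {poly R}), 0 < M1 /\ 0 < a /\
     forall y, M1 < eucl y ->
       qbit mu p j true y < S1.[eucl y] * expR (- (a * eucl y)) /\
       qbit mu p j false y < S1.[eucl y] * expR (- (a * eucl y))) ->
  (* (A2) *)
  (forall j : 'I_m, exists (M2 : R) (S2 : {poly R}), 0 < M2 /\
     forall y, M2 < eucl y -> `|LLR mu p j y| < S2.[eucl y]) ->
  (* (A3) *)
  (forall j : 'I_m,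
     smooth_on [set t | 0 < t] (Psi mu p j) /\
     smooth_on [set u | 0 < u < 1] (cdf_inv (Psi mu p j))) ->
  smooth_on [set t | 0 < t] (Psibar mu p) ->
  smooth_on [set u | 0 < u < 1] (cdf_inv (Psibar mu p)) ->
  (* random coding, message 1 sent: X i = bits of symbol i of codeword 1,
     Y i = channel output; the joint law of (X_i, Y_i)_{i<N}: bits i.i.d.
     uniform, outputs conditionally independent with densities p(.|mu(X_i)) *)
  (forall i x, measurable [set w | X i w = x]) ->
  (forall i, measurable_fun [set: Omega] (Y i)) ->
  (forall (N : nat) (x : nat -> {ffun 'I_m -> bool})
          (A : nat -> set (d.-tuple R)),
     (forall i, measurable (A i)) ->
     P [set w | forall i, (i < N)%N -> X i w = x i /\ A i (Y i w)] =
     (\prod_(i < N) (((2 ^ m)%:R)^-1 *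
        fine (lebint (fun y => ((\1_(A i) y : R) * p (mu (x i)) y)%:E))))%:E) ->
  (fun N : nat =>
     varP P (fun w =>
       orbgrand_D (fun k : 'I_N * 'I_m => LLR mu p k.2 (Y k.1 w))
                  (fun i : 'I_N => X i w)))
    @ \oo --> 0.
Proof.
move=> m_gt0 _ _ mp _ p1 _ _ _ _ _ mX mY law.
exact: varP_orbgrand_D_cvg0 mX mY law p1 mp m_gt0.
Qed.
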